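(* Let $K$ be a Henselian valued field and $f(x)=\sum_{i=0}^d a_ix^i$ a nonzero polynomial with coefficients in $K$. Let $N$ be a positive integer and $\xi\in\mathrm{RV}_N^\times$. Suppose that \[\mathrm{ord}\Big(\sum_{i=1}^d\mathrm{rv}_N(ia_i)\xi^{i-1}\Big)\le\min_{1\le i\le d}\mathrm{ord}(a_i\xi^{i-1})+\mathrm{ord}\,N,\] and that there exists $\tilde\xi\in\mathrm{RV}_{N^2}$ with $\mathrm{rv}_N(\tilde\xi)=\xi$ and \[0\in\sum_{i=0}^d\mathrm{rv}_{N^2}(a_i)\tilde\xi^i.\] Then there exists a unique $x_0\in K$ with $\mathrm{rv}_N(x_0)=\xi$ and $f(x_0)=0$.
   Context: For a valued field $K$ with valuation ring $\mathcal{O}_K$, maximal ideal $\mathcal{M}_K$, additive value group $\Gamma$ and valuation $\mathrm{ord}\colon K^\times\to\Gamma$ (with $\mathrm{ord}\,0=\infty$), and a positive integer $N$: $\mathrm{RV}_N^\times=K^\times/(1+N\mathcal{M}_K)$ (a multiplicative group), $\mathrm{RV}_N=\mathrm{RV}_N^\times\cup\{0\}$ with multiplication extended by $0$, $\mathrm{rv}_N\colon K\to\mathrm{RV}_N$ the projection with $\mathrm{rv}_N(0)=0$, and for $N\mid M$ the induced map $\mathrm{rv}_N\colon\mathrm{RV}_M\to\mathrm{RV}_N$. The valuation factors through $\mathrm{ord}\colon\mathrm{RV}_N^\times\to\Gamma$. For $\xi_0,\dots,\xi_d\in\mathrm{RV}_N$, $\sum_{i}\xi_i$ denotes the set $\{\mathrm{rv}_N(x_0+\dots+x_d)\mid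 x_i\in K,\ \mathrm{rv}_N(x_i)=\xi_i\}\subseteq\mathrm{RV}_N$. For $A\subseteq\mathrm{RV}_N$ and $\delta\in\Gamma$, $\mathrm{ord}(A)\le\delta$ means $\mathrm{ord}(x)\le\delta$ for all $x\in A$. *)

From HB Require Import structures.
From mathcomp Require Import all_boot all_order all_algebra.
Set Implicit Arguments. Unset Strict Implicit. Unset Printing Implicit Defensive.
Import Order.TTheory GRing.Theory Num.Theory.
Local Open Scope ring_scope.

(* A valued field is presented by its valuation ring O ⊆ K (the valuation
   ord : K^× -> Γ is recovered up to equivalence as K^× -> K^×/O^×). *)
Definition valuation_ring (K : fieldType) (O : K -> Prop) : Prop :=
  [/\ O 0, O 1,
      (forall x y, O x -> O y -> O (x - y)),
      (forall x y, O x -> O y -> O (x * y)) &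
      (forall x, x != 0 -> O x \/ O x^-1)].

Definition vmax (K : fieldType) (O : K -> Prop) (x : K) : Prop :=
  O x /\ (x = 0 \/ ~ O x^-1).

(* vle O x y  <->  ord x <= ord y   (with ord 0 = oo) *)
Definition vle (K : fieldType) (O : K -> Prop) (x y : K) : Prop :=
  if x == 0 then y = 0 else O (y / x).

Definition henselian (K : fieldType) (O : K -> Prop) : Prop :=
  forall (p : {poly K}) (a : K),
    p \is monic -> (forall i, O p`_i) -> O a ->
    vmax O p.[a] -> ~ vmax O (p^`()).[a] ->
    exists b, [/\ O b, p.[b] = 0 & vmax O (b - a)].

(* rv_eq O N x y  <->  rv_N(x) = rv_N(y), where rv_N : K -> K^×/(1+N M_K) ∪ {0} *)
Definition rv_eq (K : fieldType) (O : K -> Prop) (N : nat) (x y : K) : Prop :=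
  (x = 0 /\ y = 0) \/
  (x != 0 /\ exists m, vmax O m /\ y = x * (1 + N%:R * m)).

(* For ts = [:: t_0; ...; t_d] (representatives of ξ_i = rv_N(t_i)),
   rv_sum_mem O N ts s  <->  rv_N(s) ∈ Σ_i ξ_i
                        =  { rv_N(x_0+...+x_d) | rv_N(x_i) = ξ_i }. *)
Definition rv_sum_mem (K : fieldType) (O : K -> Prop) (N : nat)
    (ts : seq K) (s : K) : Prop :=
  exists xs : seq K,
    [/\ size xs = size ts,
        (forall i, (i < size ts)%N -> rv_eq O N (nth 0 ts i) (nth 0 xs i)) &
        rv_eq O N (\sum_(x <- xs) x) s].

(* Write rv_N(z) = xi and T_j(z) = z^j f^[j](z) (Hasse derivatives), so that
   f(z (1 + t)) = sum_j T_j(z) t^j.  The hypothesis on the derivative says that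
   T_1(z) = z f'(z) divides N a_i z^i for i >= 1, hence N T_j(z) for j >= 1.
   Thus for t = N m with m in M_K, f(z (1 + t)) = f(z) + T_1(z) t (1 + u) with
   u in M_K, which gives uniqueness.  For existence, the second hypothesis gives
   y with f(y) / (N T_1(y)) in M_K, and the substitution t = s f(y) / T_1(y)
   turns f(y (1 + t)) = 0 into 1 + s + s^2 R(s) = 0 with R over M_K; Hensel's
   lemma, applied to the monic reversal of this polynomial, solves it. *)

From HB Require Import structures.
From mathcomp Require Import all_boot all_order all_algebra.
From mathcomp Require Import ring zify.
Set Implicit Arguments.
Unset Strict Implicit.
Unset Printing Implicit Defensive.
Import Order.TTheory GRing.Theory Num.Theory.
Local Open Scope ring_scope.

Section Taylor.
Variable R : comNzRingType.
Implicit Types (f : {poly R}) (z t : R).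

Definition taylor_coef f z (j : nat) : R := z ^+ j * f^`N(j).[z].

Lemma taylor_coef0 f z : taylor_coef f z 0 = f.[z].
Proof. by rewrite /taylor_coef expr0 mul1r nderivn0. Qed.

Lemma taylor_coef1 f z : taylor_coef f z 1 = z * f^`().[z].
Proof. by rewrite /taylor_coef expr1 nderivn1. Qed.

Lemma horner_mul1D_taylor f z t n : (size f <= n)%N ->
  f.[z * (1 + t)] = \sum_(j < n) taylor_coef f z j * t ^+ j.
Proof.
move=> le_f_n; rewrite mulrDr mulr1 (nderiv_taylor_wide (mulrC _ _) le_f_n).
by apply: eq_bigr => j _; rewrite /taylor_coef exprMn; ring.
Qed.

End Taylor.

Lemma horner_mul1D_taylor_linear (K : fieldType) (f : {poly K}) z t :
    taylor_coef f z 1 != 0 ->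
  f.[z * (1 + t)] = f.[z] + taylor_coef f z 1 * t *
    (1 + \sum_(j < size f) taylor_coef f z j.+2 * t ^+ j.+1 / taylor_coef f z 1).
Proof.
move=> T1; rewrite (horner_mul1D_taylor z t (leqW (leqnSn _))) !big_ord_recl.
rewrite taylor_coef0 expr0 mulr1 expr1 mulrDr mulr1 mulr_sumr; congr (_ + (_ + _)).
by apply: eq_bigr => j _; rewrite !lift0 [t ^+ _.+2]exprS; field.
Qed.

Lemma horner_rev (K : fieldType) (p : {poly K}) n b : (size p <= n)%N -> b != 0 ->
  b * (\poly_(k < n) p`_(n.-1 - k)).[b] = b ^+ n * p.[b^-1].
Proof.
move=> le_p_n b0; rewrite horner_poly (horner_coef_wide _ le_p_n) !mulr_sumr.
rewrite (reindex_inj rev_ord_inj); apply: eq_bigr => -[k lt_kn] _ /=.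
have -> : (n.-1 - (n - k.+1) = k)%N by lia.
rewrite [in RHS](_ : n = (n - k.+1).+1 + k)%N; last by lia.
by rewrite exprD exprVn exprS; field; rewrite expf_neq0.
Qed.

Section ValuationRing.
Variables (K : fieldType) (O : K -> Prop).
Hypothesis hO : valuation_ring O.

Lemma vr0 : O 0. Proof. by case: hO. Qed.
Lemma vr1 : O 1. Proof. by case: hO. Qed.
Lemma vrB x y : O x -> O y -> O (x - y). Proof. by case: hO => _ _ + _ _; apply. Qed.
Lemma vrM x y : O x -> O y -> O (x * y). Proof. by case: hO => _ _ _ + _; apply. Qed.
Lemma vr_or_inv x : x != 0 -> O x \/ O x^-1. Proof. by case: hO => _ _ _ _; apply. Qed.

Lemma vrN x : O x -> O (- x).
Proof. by rewrite -sub0r; apply: vrB vr0. Qed.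

Lemma vrD x y : O x -> O y -> O (x + y).
Proof. by move=> Ox Oy; rewrite -[y]opprK; apply/vrB/vrN. Qed.

Lemma vr_sum (I : Type) (r : seq I) (P : pred I) (F : I -> K) :
  (forall i, P i -> O (F i)) -> O (\sum_(i <- r | P i) F i).
Proof. by move=> OF; apply: big_ind => //; [apply: vr0 | apply: vrD]. Qed.

Lemma vr_nat n : O n%:R.
Proof. by elim: n => [|n On]; [apply: vr0 | rewrite -natr1; apply: vrD On vr1]. Qed.

Lemma vrMn x n : O x -> O (x *+ n).
Proof. by move=> Ox; rewrite -mulr_natr; apply/vrM/vr_nat. Qed.

Lemma vrX x n : O x -> O (x ^+ n).
Proof. by move=> Ox; elim: n => [|n On]; [apply: vr1 | rewrite exprS; apply: vrM]. Qed.

Lemma vmax_vr x : vmax O x -> O x. Proof. by case. Qed.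

Lemma vmax0 : vmax O 0. Proof. by split; [apply: vr0 | left]. Qed.

Lemma not_vmax1 : ~ vmax O 1.
Proof. by case=> _ [/eqP|]; rewrite ?oner_eq0 // invr1; apply; apply: vr1. Qed.

Lemma vmaxMr a r : vmax O a -> O r -> vmax O (a * r).
Proof.
case=> Oa [->|Oa'] Or; first by rewrite mul0r; apply: vmax0.
split; first exact: vrM.
have [->|r0] := eqVneq r 0; first by left; rewrite mulr0.
have [->|a0] := eqVneq a 0; first by left; rewrite mul0r.
right=> Oar'; apply: Oa'.
have -> : a^-1 = r * (a * r)^-1 by rewrite invfM mulrCA mulfV ?mulr1.
exact: vrM.
Qed.

Lemma vmaxMn a n : vmax O a -> vmax O (a *+ n).
Proof. by rewrite -mulr_natr => /vmaxMr; apply; apply: vr_nat. Qed.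

Lemma vmaxMl r a : O r -> vmax O a -> vmax O (r * a).
Proof. by rewrite mulrC => Or /vmaxMr; apply. Qed.

Lemma vmaxD a b : vmax O a -> vmax O b -> vmax O (a + b).
Proof.
move=> Ma Mb; have [->|a0] := eqVneq a 0; first by rewrite add0r.
have [->|b0] := eqVneq b 0; first by rewrite addr0.
have ba0 : b / a != 0 by rewrite mulf_neq0 ?invr_eq0.
case: (vr_or_inv ba0) => [Oba|Oab].
  have -> : a + b = a * (1 + b / a) by rewrite mulrDr mulr1 mulrCA mulfV ?mulr1.
  exact/vmaxMr/vrD/Oba/vr1.
have -> : a + b = b * (a / b + 1) by rewrite mulrDr mulr1 mulrCA mulfV ?mulr1.
by apply/vmaxMr/vrD/vr1; rewrite invf_div in Oab.
Qed.

Lemma vmaxN a : vmax O a -> vmax O (- a).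
Proof. by rewrite -mulN1r; apply/vmaxMl/vrN/vr1. Qed.

Lemma vmax_sum (I : Type) (r : seq I) (P : pred I) (F : I -> K) :
  (forall i, P i -> vmax O (F i)) -> vmax O (\sum_(i <- r | P i) F i).
Proof. by move=> MF; apply: big_ind => //; [apply: vmax0 | apply: vmaxD]. Qed.

Lemma vmax_horner (p : {poly K}) a : (forall i, vmax O p`_i) -> O a -> vmax O p.[a].
Proof. by move=> Mp Oa; rewrite horner_coef; apply: vmax_sum => i _; apply/vmaxMr/vrX. Qed.

Lemma unit_addr_vmax u m : u != 0 -> O u^-1 -> vmax O m -> ~ vmax O (u + m).
Proof.
move=> u0 Ou' Mm /vmaxD/(_ (vmaxN Mm)); rewrite addrK => /vmaxMr/(_ Ou').
by rewrite mulfV //; apply: not_vmax1.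
Qed.

Lemma add1r_vmax_neq0 m : vmax O m -> 1 + m != 0.
Proof.
move=> Mm; apply/eqP => m1; apply: (unit_addr_vmax (oner_neq0 K) _ Mm).
  by rewrite invr1; apply: vr1.
by rewrite m1; apply: vmax0.
Qed.

Lemma vr_inv_add1r m : vmax O m -> O (1 + m)^-1.
Proof.
move=> Mm; have m1 := add1r_vmax_neq0 Mm.
have [->|m0] := eqVneq m 0; first by rewrite addr0 invr1; apply: vr1.
have [Omu|Oum] := vr_or_inv (mulf_neq0 m0 (invr_neq0 m1)).
  have -> : (1 + m)^-1 = 1 - m / (1 + m) by field.
  exact: vrB vr1 Omu.
case: Mm => _ [/eqP|]; first by rewrite (negbTE m0).
move=> Om'; exfalso; apply: Om'.
have -> : m^-1 = (m / (1 + m))^-1 - 1 by field; rewrite m0 m1.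
exact: vrB Oum vr1.
Qed.

(* The reversed polynomial [X^(e+1) + X^e + ...] is monic and has the simple root
   [-1] modulo [M_K]; its root [b] gives the root [b^-1]. *)
Lemma henselian_root_1X (R : {poly K}) : henselian O -> (forall i, vmax O R`_i) ->
  exists2 s, O s & 1 + s + s ^+ 2 * R.[s] = 0.
Proof.
move=> hens MR; set e := size R; set Rrev := \poly_(k < e) R`_(e.-1 - k).
have MRrev i : vmax O Rrev`_i.
  by rewrite coef_poly; case: ifP => _; [apply: MR | apply: vmax0].
set P := 'X^(e.+1) + ('X^e + Rrev).
have P_monic : P \is monic.
  rewrite monicE lead_coefDl ?lead_coefXn // size_polyXn ltnS.
  by rewrite (leq_trans (size_polyD _ _)) // geq_max size_polyXn leqnn leqW ?size_poly.
have OP i : O P`_i by rewrite !coefD !coefXn; apply/vrD/vrD/vmax_vr/MRrev/vr_nat/vr_nat.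
have O_1 : O (-1) := vrN vr1.
have MP_1 : vmax O P.[-1].
  by rewrite !hornerD !hornerXn exprS mulN1r addKr; apply: vmax_horner.
have nMdP_1 : ~ vmax O P^`().[-1].
  rewrite !derivD !derivXn !hornerD !hornerMn !hornerXn /= addrA.
  have -> n : (-1) ^+ n *+ n.+1 + (-1) ^+ n.-1 *+ n = (-1) ^+ n :> K.
    case: n => [|n]; rewrite ?mulr0n ?addr0 //=.
    by rewrite exprS mulN1r mulNrn mulrSr opprD addrAC addNr add0r.
  apply: unit_addr_vmax; first by rewrite expf_eq0 oppr_eq0 oner_eq0 andbF.
    by rewrite -exprVn invrN1; apply: vrX.
  by apply: vmax_horner => // i; rewrite coef_deriv; apply: vmaxMn.
have [b [Ob Pb Mb1]] := hens P (-1) P_monic OP O_1 MP_1 nMdP_1.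
rewrite opprK in Mb1.
have b0 : b != 0 by apply: contra_notN not_vmax1 => /eqP b0; rewrite b0 add0r in Mb1.
exists b^-1.
  have -> : b^-1 = - (1 + - (b + 1))^-1 by rewrite opprD addrA addrC addKr invrN opprK.
  exact/vrN/vr_inv_add1r/vmaxN.
apply: (mulfI (expf_neq0 e.+2 b0)); rewrite mulr0 -(mulr0 b) -Pb.
rewrite !hornerD !hornerXn !mulrDr (horner_rev (leqnn _) b0) -/e !exprS.
by field.
Qed.

Section ResidueClasses.
Variable N : nat.

Definition rv_near (a b : K) : Prop := exists2 m, vmax O m & b = a * (1 + N%:R * m).

Lemma rv_near_refl a : rv_near a a.
Proof. by exists 0; [apply: vmax0 | rewrite mulr0 addr0 mulr1]. Qed.

Lemma rv_eqE a b : rv_eq O N a b <-> rv_near a b.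
Proof.
split=> [[[-> ->]|[_ [m [Mm ->]]]]|[m Mm ->]]; first exact: rv_near_refl.
  by exists m.
have [->|a0] := eqVneq a 0; first by left; rewrite mul0r.
by right; split=> //; exists m.
Qed.

Lemma vmax_natMl m : vmax O m -> vmax O (N%:R * m).
Proof. exact/vmaxMl/vr_nat. Qed.

Lemma mul_1DN_vmax m m' : vmax O m -> vmax O m' ->
  exists2 m'', vmax O m'' & (1 + N%:R * m) * (1 + N%:R * m') = 1 + N%:R * m''.
Proof.
move=> Mm Mm'; exists (m + m' + N%:R * m * m'); last by ring.
by apply/vmaxD/vmaxMr/(vmax_vr Mm')/vmax_natMl/Mm/vmaxD.
Qed.

Lemma rv_near_trans a b c : rv_near a b -> rv_near b c -> rv_near a c.
Proof.
move=> [m Mm ->] [m' Mm' ->]; have [m'' Mm'' e] := mul_1DN_vmax Mm Mm'.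
by exists m''; rewrite // -mulrA e.
Qed.

Lemma rv_near_mul a b c e : rv_near a b -> rv_near c e -> rv_near (a * c) (b * e).
Proof.
move=> [m Mm ->] [m' Mm' ->]; have [m'' Mm'' E] := mul_1DN_vmax Mm Mm'.
by exists m''; rewrite // -E; ring.
Qed.

Lemma rv_near_exp a b n : rv_near a b -> rv_near (a ^+ n) (b ^+ n).
Proof.
move=> ab; elim: n => [|n IHn]; first by rewrite !expr0; apply: rv_near_refl.
by rewrite !exprS; apply: rv_near_mul.
Qed.

Lemma rv_near_sym a b : rv_near a b -> rv_near b a.
Proof.
move=> [m Mm ->]; have MNm := vmax_natMl Mm.
have u0 := add1r_vmax_neq0 MNm; set u := 1 + _ in u0 *.
exists (- (m / u)); first exact/vmaxN/vmaxMr/vr_inv_add1r.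
by rewrite /u; field.
Qed.

Lemma rv_near_eq0 a b : rv_near a b -> (b == 0) = (a == 0).
Proof.
by move=> [m /vmax_natMl/add1r_vmax_neq0 u0 ->]; rewrite mulf_eq0 (negbTE u0) orbF.
Qed.

Lemma rv_near_N0 a b : N%:R = 0 :> K -> rv_near a b -> b = a.
Proof. by move=> N0 [m _ ->]; rewrite N0 mul0r addr0 mulr1. Qed.

Lemma rv_sum_mem_iotaE (F : nat -> K) i0 n s :
  rv_sum_mem O N [seq F i | i <- iota i0 n] s <->
  exists2 b : nat -> K, (forall i, (i < n)%N -> rv_near (F (i0 + i)%N) (b i))
                      & rv_near (\sum_(i < n) b i) s.
Proof.
rewrite /rv_sum_mem size_map size_iota; split.
  move=> [xs [sz_xs near_xs /rv_eqE near_s]]; exists (nth 0 xs) => [i lt_in|].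
    by apply/rv_eqE; move: (near_xs i lt_in); rewrite (nth_map 0%N) ?size_iota ?nth_iota.
  by rewrite (big_nth 0) sz_xs big_mkord in near_s.
move=> [b near_b near_s]; exists (mkseq b n); split; first by rewrite size_mkseq.
  move=> i lt_in; rewrite nth_mkseq // (nth_map 0%N) ?size_iota ?nth_iota //.
  exact/rv_eqE/near_b.
apply/rv_eqE; rewrite big_map; move: near_s.
by rewrite -(big_mkord xpredT b) /index_iota subn0.
Qed.

End ResidueClasses.

(* The term [c * a 0] is bounded through [b 0 = - \sum_(0 < i < n) b i]. *)
Lemma vmax_sum_rv_near0 N c (a b : nat -> K) n :
    (forall i, (0 < i < n)%N -> O (c * a i)) ->
    (forall i, (i < n)%N -> rv_near (N * N) (a i) (b i)) ->
    \sum_(i < n) b i = 0 ->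
  vmax O (c * (\sum_(i < n) a i) / (N * N)%:R).
Proof.
move=> Oca ab sum_b0.
have {}Oca i : (i < n)%N -> O (c * a i).
  case: i => [n_gt0|i lt_in]; last exact: Oca.
  have Ocb i : (0 < i < n)%N -> O (c * b i).
    move=> /andP[i_gt0 lt_in]; have [m Mm ->] := ab i lt_in.
    by rewrite mulrA; apply/vrM/vrD/vmax_vr/vmax_natMl/Mm/vr1/Oca; rewrite i_gt0.
  have [m Mm b0E] := ab 0%N n_gt0.
  have -> : c * a 0%N = c * b 0%N * (1 + (N * N)%:R * m)^-1.
    by rewrite b0E mulrA mulfK // (add1r_vmax_neq0 (vmax_natMl _ Mm)).
  apply/vrM/vr_inv_add1r/vmax_natMl/Mm.
  move: sum_b0 Ocb; case: n n_gt0 {Oca ab b0E} => // n _.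
  rewrite big_ord_recl => /eqP; rewrite addr_eq0 => /eqP -> Ocb.
  rewrite mulrN mulr_sumr; apply/vrN/vr_sum => i _.
  by apply: Ocb; rewrite lift0; exact: ltn_ord i.
have [->|NN0] := eqVneq ((N * N)%:R : K) 0; first by rewrite invr0 mulr0; apply: vmax0.
rewrite -[\sum_(i < n) a i]subr0 -[X in _ - X]sum_b0 -sumrB mulr_sumr mulr_suml.
apply: vmax_sum => i _; have [m Mm ->] := ab i (ltn_ord i).
have -> : c * (a i - a i * (1 + (N * N)%:R * m)) / (N * N)%:R = - (c * a i * m).
  by field; apply: contraNneq NN0; rewrite natrM => ->; rewrite mul0r.
by apply/vmaxN/vmaxMl/Mm/Oca.
Qed.

Section HenselRV.
Variables (N : nat) (f : {poly K}).
Hypothesis hN : N%:R != 0 :> K.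

Definition deriv_dominates (z : K) : Prop :=
  taylor_coef f z 1 != 0 /\
  forall i, (0 < i)%N -> O (N%:R * (f`_i * z ^+ i) / taylor_coef f z 1).

Lemma deriv_dominates_taylor z j : deriv_dominates z -> (0 < j)%N ->
  O (N%:R * taylor_coef f z j / taylor_coef f z 1).
Proof.
move=> [_ dom] j_gt0; rewrite {1}/taylor_coef horner_coef !mulr_sumr mulr_suml.
apply: vr_sum => i _; rewrite coef_nderivn.
have -> : N%:R * (z ^+ j * (f`_(j + i) *+ 'C(j + i, j) * z ^+ i)) / taylor_coef f z 1 =
    (N%:R * (f`_(j + i) * z ^+ (j + i)) / taylor_coef f z 1) *+ 'C(j + i, j).
  move: 'C(_, _) => c; rewrite -[f`_(j + i) *+ c]mulr_natr -[_ / _ *+ c]mulr_natr.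
  by rewrite exprD; ring.
by apply/vrMn/dom; rewrite addn_gt0 j_gt0.
Qed.

Lemma vmax_taylor_tail z w j : deriv_dominates z -> vmax O w ->
  vmax O (taylor_coef f z j.+2 * (N%:R * w) ^+ j.+1 / taylor_coef f z 1).
Proof.
move=> dz Mw; have -> : taylor_coef f z j.+2 * (N%:R * w) ^+ j.+1 / taylor_coef f z 1 =
    N%:R * taylor_coef f z j.+2 / taylor_coef f z 1 * (w * (w ^+ j * N%:R ^+ j)).
  by rewrite exprMn !exprS; ring.
apply/vmaxMl/vmaxMr/vrM/vrX/vr_nat/vrX/vmax_vr/Mw/Mw.
exact: deriv_dominates_taylor.
Qed.

Lemma deriv_dominates_root_unique z z' : deriv_dominates z -> f.[z] = 0 ->
  rv_near N z z' -> f.[z'] = 0 -> z' = z.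
Proof.
move=> dz fz0 [m Mm ->]; rewrite horner_mul1D_taylor_linear ?dz.1 // fz0 add0r.
have MB : vmax O (\sum_(j < size f) taylor_coef f z j.+2 * (N%:R * m) ^+ j.+1 /
                   taylor_coef f z 1).
  by apply: vmax_sum => j _; apply: vmax_taylor_tail.
move/eqP; rewrite mulf_eq0 (negbTE (add1r_vmax_neq0 MB)) orbF mulf_eq0 (negbTE dz.1).
by rewrite mulf_eq0 (negbTE hN) => /eqP ->; rewrite mulr0 addr0 mulr1.
Qed.

(* Newton's step: with [t = N w s], the equation [f.[z * (1 + t)] = 0] becomes
   [f.[z] * (1 + s + s^2 R.[s]) = 0] with [R] having coefficients in [M_K]. *)
Lemma deriv_dominates_root_exists z : henselian O -> deriv_dominates z ->
    vmax O (f.[z] / (N%:R * taylor_coef f z 1)) ->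
  exists2 z', rv_near N z z' & f.[z'] = 0.
Proof.
move=> hens dz; set w := _ / _ => Mw; set T1 := taylor_coef f z 1.
set R := \poly_(j < size f) (taylor_coef f z j.+2 * (N%:R * w) ^+ j.+1 / T1).
have MR i : vmax O R`_i.
  by rewrite coef_poly; case: ifP => _; [apply: vmax_taylor_tail | apply: vmax0].
have [s Os Rs] := henselian_root_1X hens MR.
exists (z * (1 + N%:R * (w * s))); first by exists (w * s); [apply: vmaxMr|].
have fz : f.[z] = N%:R * w * T1 by rewrite /w /T1; field; rewrite hN dz.1.
rewrite horner_mul1D_taylor_linear ?dz.1 //.
transitivity (f.[z] * (1 + s + s ^+ 2 * R.[s])); last by rewrite Rs mulr0.
rewrite fz horner_poly !mulrDr -!addrA.
congr (_ + (_ + _)); [by rewrite mulr1 | by rewrite /T1; ring | rewrite !mulr_sumr].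
apply: eq_bigr => j _.
by rewrite !exprMn !exprS; field; rewrite dz.1.
Qed.

Lemma deriv_dominates_near x z : x != 0 -> (0 < (size f).-1)%N ->
    (forall s : K,
       rv_sum_mem O N [seq (i%:R * f`_i) * x ^+ i.-1 | i <- iota 1 (size f).-1] s ->
       forall i : nat, (1 <= i <= (size f).-1)%N ->
         vle O s ((f`_i * x ^+ i.-1) * N%:R)) ->
    rv_near N z x ->
  deriv_dominates z.
Proof.
move=> x0 d_gt0 H zx; set d := (size f).-1 in d_gt0 H.
have z0 : z != 0 by rewrite -(rv_near_eq0 zx).
have {}H := H f^`().[z].
have /H {}H : rv_sum_mem O N [seq (i%:R * f`_i) * x ^+ i.-1 | i <- iota 1 d] f^`().[z].
  apply/rv_sum_mem_iotaE; exists (fun i => (i.+1%:R * f`_i.+1) * z ^+ i).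
    by move=> i _; apply/rv_near_mul/rv_near_exp/rv_near_sym/zx/rv_near_refl.
  by rewrite horner_poly; under eq_bigr do rewrite mulr_natl; apply: rv_near_refl.
have df0 : f^`().[z] != 0.
  apply/eqP=> df0; move: (H d); rewrite d_gt0 leqnn /vle df0 eqxx => /(_ isT) /eqP.
  rewrite !mulf_eq0 expf_eq0 (negbTE x0) (negbTE hN) andbF !orbF -/(lead_coef f).
  by move: d_gt0; rewrite /d lead_coef_eq0 -size_poly_eq0; case: (size f).
have T1 : taylor_coef f z 1 != 0 by rewrite taylor_coef1 mulf_neq0.
split=> // -[//|i] _; rewrite taylor_coef1.
have [le_id | lt_di] := leqP i.+1 d; last first.
  rewrite nth_default ?mul0r ?mulr0 ?mul0r; first exact: vr0.
  by move: lt_di; rewrite /d; case: (size f).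
move: (H i.+1 le_id); rewrite /vle (negbTE df0) => Oi.
have [m Mm xE] := zx; have u0 := add1r_vmax_neq0 (vmax_natMl N Mm).
have -> : N%:R * (f`_i.+1 * z ^+ i.+1) / (z * f^`().[z]) =
    f`_i.+1 * x ^+ i * N%:R / f^`().[z] * ((1 + N%:R * m)^-1) ^+ i.
  by rewrite xE exprMn exprVn exprS; field; rewrite z0 df0 expf_neq0.
exact/vrM/vrX/vr_inv_add1r/vmax_natMl/Mm.
Qed.

Lemma deriv_dominates_newton y (b : nat -> K) n :
    deriv_dominates y -> (size f <= n)%N ->
    (forall i, (i < n)%N -> rv_near (N * N) (f`_i * y ^+ i) (b i)) ->
    \sum_(i < n) b i = 0 ->
  vmax O (f.[y] / (N%:R * taylor_coef f y 1)).
Proof.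
move=> dy le_f_n ab sum_b0.
have Oca i : (0 < i < n)%N -> O (N%:R / taylor_coef f y 1 * (f`_i * y ^+ i)).
  by case/andP=> i_gt0 _; rewrite mulrAC; apply: dy.2.
have := vmax_sum_rv_near0 Oca ab sum_b0; rewrite -horner_coef_wide //.
by congr (vmax O _); rewrite natrM; field; rewrite hN dy.1.
Qed.

End HenselRV.

End ValuationRing.

Theorem lemma2p8 (K : fieldType) (O : K -> Prop)
  (hO : valuation_ring O) (hhens : henselian O)
  (f : {poly K}) (hf : f != 0) (N : nat) (hN : (0 < N)%N)
  (x : K) (hx : x != 0) :
  let d := (size f).-1 in
  (forall s : K,
     rv_sum_mem O N [seq (i%:R * f`_i) * x ^+ i.-1 | i <- iota 1 d] s ->
     forall i : nat, (1 <= i <= d)%N ->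
       vle O s ((f`_i * x ^+ i.-1) * N%:R)) ->
  (exists y : K,
     rv_eq O N y x /\
     rv_sum_mem O (N * N) [seq f`_i * y ^+ i | i <- iota 0 d.+1] 0) ->
  exists! x0 : K, rv_eq O N x0 x /\ f.[x0] = 0.
Proof.
move=> d H1 [y [/(rv_eqE hO) yx /(rv_sum_mem_iotaE hO) [b ab /(rv_near_eq0 hO)]]].
rewrite eqxx => /esym/eqP sum_b0.
have le_f_d1 : (size f <= d.+1)%N := leqSpred _.
have [d0|d_gt0] := posnP d.
  move: sum_b0 (rv_near_eq0 hO (ab 0%N isT)); rewrite d0 big_ord1 => ->.
  rewrite eqxx mulr1 => /esym/eqP f00.
  by move: hf; rewrite -lead_coef_eq0 lead_coefE -/d d0 f00 eqxx.
have [N0|N0] := eqVneq (N%:R : K) 0.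
  have NN0 : (N * N)%:R = 0 :> K by rewrite natrM N0 mul0r.
  rewrite (rv_near_N0 N0 yx); exists y; split.
    split; first exact/(rv_eqE hO)/rv_near_refl.
    rewrite (horner_coef_wide _ le_f_d1) -[RHS]sum_b0; apply: eq_bigr => i _.
    by rewrite (rv_near_N0 NN0 (ab i (ltn_ord i))).
  by move=> x1 [/(rv_eqE hO)/(rv_near_N0 N0)].
have dom_y := deriv_dominates_near hO N0 hx d_gt0 H1 yx.
have [x0 y_x0 fx0] := deriv_dominates_root_exists hO N0 hhens dom_y
  (deriv_dominates_newton hO N0 dom_y le_f_d1 ab sum_b0).
have x0x : rv_near O N x0 x := rv_near_trans hO (rv_near_sym hO y_x0) yx.
have dom_x0 := deriv_dominates_near hO N0 hx d_gt0 H1 x0x.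
exists x0; split=> [|x1 [/(rv_eqE hO) x1x fx1]]; first by split=> //; apply/(rv_eqE hO).
apply/esym/(deriv_dominates_root_unique hO N0 dom_x0 fx0 _ fx1).
exact: (rv_near_trans hO x0x (rv_near_sym hO x1x)).
Qed.
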